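(* Let $S>1/2$ and $\beta<1/2$. Then for every $t\in\mathbb{R}$ the trilinear operator $R_3$ defined in the context satisfies $$\|R_3(u,v,w)\|_{\dot H^{-S}}\le c_6'(S,\beta)\|u\|_{\dot H^{-\beta}}\|v\|_{\dot H^0}\|w\|_{\dot H^0},$$ with a constant $c_6'(S,\beta)$ depending only on $S,\beta$.
   Context: Write $\mathbb{Z}_0=\mathbb{Z}\setminus\{0\}$. For $s\in\mathbb{R}$, $\dot H^s$ denotes the Hilbert space of complex sequences $v=(v_k)_{k\in\mathbb{Z}_0}$ with $\|v\|_{\dot H^s}^2=\sum_{k\in\mathbb{Z}_0}|k|^{2s}|v_k|^2<\infty$. For $t\in\mathbb{R}$, $$R_3(u,v,w)_k=\sum_{k_1+k_2+k_3=k,\ k_1,k_2,k_3\in\mathbb{Z}_0}\frac{e^{3i(k_1+k_2)(k_2+k_3)(k_3+k_1)t}}{k_1}u_{k_1}v_{k_2}w_{k_3},\qquad k\in\mathbb{Z}_0.$$ *)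

From Stdlib Require Import Reals ZArith.
From Coquelicot Require Import Coquelicot.
Open Scope R_scope.

(* A sequence indexed by Z_0 = Z \ {0} is represented as a function Z -> C;
   its value at 0 is never used by any definition below. *)
Definition seqZ0 := Z -> C.

(* Enumeration of Z_0 : 0 |-> 1, 1 |-> -1, 2 |-> 2, 3 |-> -2, ... (a bijection nat -> Z_0). *)
Definition zenum (n : nat) : Z :=
  if Nat.even n then Z.of_nat (Nat.div2 n + 1) else (- Z.of_nat (Nat.div2 n + 1))%Z.

Definition kpow (s : R) (k : Z) : R := Rpower (IZR (Z.abs k)) (2 * s).

Definition Hdot_terms (s : R) (v : seqZ0) (n : nat) : R :=
  kpow s (zenum n) * (Cmod (v (zenum n)))^2.

Definition in_Hdot (s : R) (v : seqZ0) : Prop := ex_series (Hdot_terms s v).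

Definition Hdot_norm (s : R) (v : seqZ0) : R := sqrt (Series (Hdot_terms s v)).

(* value of a complex series (meaningful when it converges) *)
Definition CSeries (a : nat -> C) : C :=
  (Series (fun n => fst (a n)), Series (fun n => snd (a n))).

Definition cexpi (theta : R) : C := (cos theta, sin theta).

Definition R3_term (t : R) (u v w : seqZ0) (k k1 k2 : Z) : C :=
  let k3 := (k - k1 - k2)%Z in
  if Z.eqb k3 0 then RtoC 0 else
  Cmult (Cmult (Cmult
    (Cdiv (cexpi (3 * IZR ((k1 + k2) * (k2 + k3) * (k3 + k1)) * t)) (RtoC (IZR k1)))
    (u k1)) (v k2)) (w k3).

(* R_3(u,v,w)_k = sum over k1,k2,k3 in Z_0 with k1+k2+k3 = k, written as the
   iterated sum over k1 in Z_0, then k2 in Z_0 (k3 = k - k1 - k2 must be nonzero). *)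
Definition R3 (t : R) (u v w : seqZ0) : seqZ0 :=
  fun k => CSeries (fun n1 => CSeries (fun n2 => R3_term t u v w k (zenum n1) (zenum n2))).

(* absolute summability of the series defining R_3(u,v,w)_k over
   {(k1,k2,k3) in Z_0^3 : k1+k2+k3 = k} (iterated, Tonelli form) *)
Definition R3_abs_summable (t : R) (u v w : seqZ0) (k : Z) : Prop :=
  (forall n1, ex_series (fun n2 => Cmod (R3_term t u v w k (zenum n1) (zenum n2)))) /\
  ex_series (fun n1 => Series (fun n2 => Cmod (R3_term t u v w k (zenum n1) (zenum n2)))).

(* The oscillating factor has modulus one, so it is discarded. For fixed [k],
   Cauchy-Schwarz in [k2] bounds [sum_(k2) |v_k2| |w_(k-k1-k2)|] by
   [||v||_0 ||w||_0], and Cauchy-Schwarz in [k1] bounds [sum_(k1) |u_k1| / |k1|]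
   by [||u||_(-beta) (sum_k |k|^(2 beta - 2))^(1/2)], finite as [beta < 1/2].
   Hence [R_3(u,v,w)] is bounded uniformly in [k], and a bounded sequence lies
   in [H^(-S)] since [sum_k |k|^(-2S)] is finite for [S > 1/2]. *)

From Stdlib Require Import Reals ZArith Lra Lia Psatz Classical.
From Coquelicot Require Import Coquelicot.
Open Scope R_scope.

(* Sum of the first [n] terms; unlike [sum_n] it allows the empty sum. *)
Fixpoint psum (a : nat -> R) (n : nat) : R :=
  match n with O => 0 | S m => psum a m + a m end.

Lemma sum_n_psum a N : sum_n a N = psum a (S N).
Proof.
  induction N as [|N IH].
  - rewrite sum_O; simpl; symmetry; apply Rplus_0_l.
  - rewrite sum_Sn, IH; unfold plus; simpl; ring.
Qed.

Lemma psum_ext a b n : (forall i, (i < n)%nat -> a i = b i) -> psum a n = psum b n.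
Proof.
  induction n as [|n IH]; intros H; simpl; auto.
  rewrite IH, (H n) by (auto; lia); reflexivity.
Qed.

Lemma psum_nonneg a n : (forall i, 0 <= a i) -> 0 <= psum a n.
Proof. intros H; induction n; simpl; [lra|]; pose proof (H n); lra. Qed.

Lemma psum_plus a b n : psum (fun i => a i + b i) n = psum a n + psum b n.
Proof. induction n; simpl; [ring|]; rewrite IHn; ring. Qed.

Lemma psum_eq0 a n : (forall i, (i < n)%nat -> a i = 0) -> psum a n = 0.
Proof.
  intros H; rewrite (psum_ext a (fun _ => 0)) by auto.
  clear; induction n; simpl; [|rewrite IHn]; ring.
Qed.

Lemma psum_single a n i0 : (i0 < n)%nat ->
  (forall i, (i < n)%nat -> i <> i0 -> a i = 0) -> psum a n = a i0.
Proof.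
  induction n as [|n IH]; intros Hi H; [lia|]; simpl.
  destruct (Nat.eq_dec i0 n) as [->|Hne].
  - rewrite psum_eq0 by (intros i Hi'; apply H; lia); ring.
  - rewrite IH, (H n) by (try lia; intros; apply H; lia); ring.
Qed.

Lemma Series_nonneg a : (forall n, 0 <= a n) -> ex_series a -> 0 <= Series a.
Proof.
  intros H He; apply Rle_trans with (Series (fun n => 0 * a n)).
  - rewrite Series_scal_l; lra.
  - apply Series_le; auto; intros n; specialize (H n); split; lra.
Qed.

Lemma psum_le_Series a N : (forall n, 0 <= a n) -> ex_series a -> psum a N <= Series a.
Proof.
  intros Ha He.
  apply Rle_trans with (psum a (S N)); [simpl; pose proof (Ha N); lra|].
  rewrite <- sum_n_psum.
  apply (is_lim_seq_incr_compare (sum_n a)); [exact (Series_correct _ He)|].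
  intros n; rewrite sum_Sn; unfold plus; simpl; pose proof (Ha (S n)); lra.
Qed.

Lemma ex_series_psum_bounded a M :
  (forall n, 0 <= a n) -> (forall N, psum a N <= M) -> ex_series a /\ Series a <= M.
Proof.
  intros Ha HM.
  assert (Hinc : forall n, sum_n a n <= sum_n a (S n)).
  { intros n; rewrite sum_Sn; unfold plus; simpl; pose proof (Ha (S n)); lra. }
  assert (Hbd : forall n, sum_n a n <= M) by (intros n; rewrite sum_n_psum; apply HM).
  destruct (ex_finite_lim_seq_incr _ M Hinc Hbd) as [l Hl].
  split; [exists l; exact Hl|].
  unfold Series; rewrite (is_lim_seq_unique _ _ Hl); simpl.
  apply (is_lim_seq_le (sum_n a) (fun _ => M) l M); auto using is_lim_seq_const.
Qed.

Lemma ex_series_Series_le a b :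
  (forall n, 0 <= a n <= b n) -> ex_series b -> ex_series a /\ Series a <= Series b.
Proof.
  intros H Hb; split; [|apply Series_le; auto].
  apply (ex_series_le a b); auto; intros n; destruct (H n).
  change (norm (a n)) with (Rabs (a n)); rewrite Rabs_pos_eq; lra.
Qed.

Section InjectiveReindexing.

Variables (a b : nat -> R) (p : nat -> nat).
Hypothesis a_ge0 : forall n, 0 <= a n.
Hypothesis b_ge0 : forall n, 0 <= b n.
Hypothesis b_le_a : forall n, b n <= a (p n).
Hypothesis p_inj : forall i j, b i <> 0 -> b j <> 0 -> p i = p j -> i = j.

(* Induction on [M]: the indices [i] with [p i = M] and [b i <> 0] are at most one. *)
Lemma psum_inj_le M N : psum (fun i => if (p i <? M)%nat then b i else 0) N <= psum a M.
Proof.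
  induction M as [|M IH].
  - rewrite psum_eq0; simpl; [lra|]; intros i _.
    destruct (Nat.ltb_spec (p i) 0); [lia|reflexivity].
  - rewrite (psum_ext _ (fun i => (if (p i <? M)%nat then b i else 0) +
                                   (if (p i =? M)%nat then b i else 0))).
    2:{ intros i _; destruct (Nat.ltb_spec (p i) (S M)), (Nat.ltb_spec (p i) M),
          (Nat.eqb_spec (p i) M); try lia; ring. }
    rewrite psum_plus; simpl.
    enough (psum (fun i => if (p i =? M)%nat then b i else 0) N <= a M) by lra.
    destruct (classic (exists i0, (i0 < N)%nat /\ p i0 = M /\ b i0 <> 0))
      as [[i0 [Hi0 [Hp Hb]]]|Hnone].
    + rewrite (psum_single _ _ i0 Hi0).
      * rewrite Hp, Nat.eqb_refl, <- Hp; apply b_le_a.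
      * intros i Hi Hne; destruct (Nat.eqb_spec (p i) M); auto.
        destruct (Req_dec (b i) 0); auto.
        exfalso; apply Hne, p_inj; auto; congruence.
    + rewrite psum_eq0; [apply a_ge0|]; intros i Hi.
      destruct (Nat.eqb_spec (p i) M); auto.
      destruct (Req_dec (b i) 0); auto; exfalso; eauto.
Qed.

Lemma ex_series_inj_reindex : ex_series a -> ex_series b /\ Series b <= Series a.
Proof.
  intros Ha; apply ex_series_psum_bounded; auto; intros N.
  assert (HM : exists M, forall i, (i < N)%nat -> (p i < M)%nat).
  { induction N as [|N [M HM]]; [exists O; lia|].
    exists (Nat.max M (S (p N))); intros i Hi.
    destruct (Nat.eq_dec i N) as [->|]; [lia|]; specialize (HM i ltac:(lia)); lia. }
  destruct HM as [M HM].
  rewrite (psum_ext b (fun i => if (p i <? M)%nat then b i else 0)).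
  - pose proof (psum_inj_le M N); pose proof (psum_le_Series a M a_ge0 Ha); lra.
  - intros i Hi; specialize (HM i Hi); apply Nat.ltb_lt in HM; rewrite HM; auto.
Qed.

End InjectiveReindexing.

Lemma psum_mult_le_sqrt a b n :
  psum (fun i => a i * b i) n <=
  sqrt (psum (fun i => a i ^ 2) n) * sqrt (psum (fun i => b i ^ 2) n).
Proof.
  induction n as [|n IH]; cbn [psum]; [rewrite sqrt_0; lra|].
  set (A := psum (fun i => a i ^ 2) n); set (B := psum (fun i => b i ^ 2) n).
  assert (A_ge0 : 0 <= A) by (apply psum_nonneg; intros; apply pow2_ge_0).
  assert (B_ge0 : 0 <= B) by (apply psum_nonneg; intros; apply pow2_ge_0).
  pose proof (sqrt_cauchy (sqrt A) (a n) (sqrt B) (b n)) as CS.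
  rewrite !Rsqr_sqrt, !Rsqr_pow2 in CS by assumption; fold A B in IH; lra.
Qed.

Lemma Series_mult_le_sqrt a b :
  (forall n, 0 <= a n) -> (forall n, 0 <= b n) ->
  ex_series (fun n => a n ^ 2) -> ex_series (fun n => b n ^ 2) ->
  ex_series (fun n => a n * b n) /\
  Series (fun n => a n * b n) <=
  sqrt (Series (fun n => a n ^ 2)) * sqrt (Series (fun n => b n ^ 2)).
Proof.
  intros Ha Hb HA HB; apply ex_series_psum_bounded.
  - intros n; apply Rmult_le_pos; auto.
  - intros N; eapply Rle_trans; [apply psum_mult_le_sqrt|].
    apply Rmult_le_compat; try apply sqrt_pos; apply sqrt_le_1_alt;
      apply psum_le_Series; auto; intros; apply pow2_ge_0.
Qed.

Lemma ln_ge_1_minus_inv y : 0 < y -> 1 - / y <= ln y.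
Proof.
  intros Hy; pose proof (exp_ineq1_le (- ln y)) as H.
  rewrite exp_Ropp, exp_ln in H by lra; lra.
Qed.

(* The discrete analogue of [x^(-s-1) = (x^(-s))' / (-s)], which makes the
   partial sums of [n^(-s-1)] telescope. *)
Lemma Rpower_succ_le_telescope x s : 0 < x -> 0 < s ->
  Rpower (x + 1) (- (s + 1)) <= (Rpower x (- s) - Rpower (x + 1) (- s)) / s.
Proof.
  intros Hx Hs; unfold Rpower.
  set (L1 := ln x); set (L2 := ln (x + 1)).
  assert (HL : 1 / (x + 1) <= L2 - L1).
  { unfold L1, L2; rewrite <- ln_div by lra.
    pose proof (ln_ge_1_minus_inv ((x + 1) / x) ltac:(apply Rdiv_lt_0_compat; lra)).
    replace (1 / (x + 1)) with (1 - / ((x + 1) / x)) by (field; lra); lra. }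
  assert (E1 : exp (- (s + 1) * L2) = exp (- s * L2) * / (x + 1)).
  { replace (- (s + 1) * L2) with (- s * L2 + - L2) by ring.
    rewrite exp_plus, exp_Ropp; unfold L2; rewrite exp_ln by lra; reflexivity. }
  assert (E2 : exp (- s * L1) = exp (- s * L2) * exp (s * (L2 - L1))).
  { rewrite <- exp_plus; f_equal; ring. }
  pose proof (exp_ineq1_le (s * (L2 - L1))); pose proof (exp_pos (- s * L2)).
  rewrite E1, E2; apply Rmult_le_reg_r with s; [lra|].
  replace ((exp (- s * L2) * exp (s * (L2 - L1)) - exp (- s * L2)) / s * s)
    with (exp (- s * L2) * (exp (s * (L2 - L1)) - 1)) by (field; lra).
  replace (exp (- s * L2) * / (x + 1) * s) with (exp (- s * L2) * (s * (1 / (x + 1))))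
    by (field; lra).
  apply Rmult_le_compat_l; [lra|]; nra.
Qed.

Lemma psum_Rpower_succ_le s N : 0 < s ->
  psum (fun n => Rpower (INR n + 1) (- (s + 1))) (S N) <=
  1 + (1 - Rpower (INR N + 1) (- s)) / s.
Proof.
  intros Hs; induction N as [|N IH].
  - simpl; unfold Rpower; rewrite !Rplus_0_l, ln_1, !Rmult_0_r, exp_0.
    replace ((1 - 1) / s) with 0 by (field; lra); lra.
  - change (psum ?f (S (S N))) with (psum f (S N) + f (S N)); cbv beta; rewrite S_INR.
    pose proof (Rpower_succ_le_telescope (INR N + 1) s
                  ltac:(pose proof (pos_INR N); lra) Hs).
    assert ((1 - Rpower (INR N + 1) (- s)) / s +
            (Rpower (INR N + 1) (- s) - Rpower (INR N + 1 + 1) (- s)) / s =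
            (1 - Rpower (INR N + 1 + 1) (- s)) / s) by (field; lra).
    lra.
Qed.

Lemma ex_series_Rpower_succ s : 0 < s -> ex_series (fun n => Rpower (INR n + 1) (- (s + 1))).
Proof.
  intros Hs; apply (ex_series_psum_bounded _ (1 + 1 / s)).
  - intros; unfold Rpower; left; apply exp_pos.
  - assert (0 < / s) by (apply Rinv_0_lt_compat; lra).
    intros [|N]; [simpl; unfold Rdiv; lra|].
    pose proof (psum_Rpower_succ_le s N Hs).
    assert (0 < Rpower (INR N + 1) (- s)) by (unfold Rpower; apply exp_pos).
    unfold Rdiv in *; nra.
Qed.

Definition zenum_inv (z : Z) : nat :=
  if (0 <? z)%Z then (2 * (Z.to_nat z - 1))%nat else (2 * (Z.to_nat (- z) - 1) + 1)%nat.

Lemma zenum_invK z : z <> 0%Z -> zenum (zenum_inv z) = z.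
Proof.
  intros Hz; unfold zenum_inv, zenum; destruct (Z.ltb_spec 0 z).
  - rewrite Nat.even_even, Nat.div2_double; lia.
  - rewrite Nat.even_odd, Nat.div2_odd'; lia.
Qed.

Lemma zenumK n : zenum_inv (zenum n) = n.
Proof.
  pose proof (Nat.div2_odd n) as Hn; unfold zenum_inv, zenum.
  rewrite <- Nat.negb_odd; destruct (Nat.odd n); simpl in *.
  - destruct (Z.ltb_spec 0 (- Z.of_nat (Nat.div2 n + 1))); lia.
  - destruct (Z.ltb_spec 0 (Z.of_nat (Nat.div2 n + 1))); lia.
Qed.

Lemma zenum_inj n m : zenum n = zenum m -> n = m.
Proof. intros H; rewrite <- (zenumK n), <- (zenumK m), H; reflexivity. Qed.

Lemma zenum_neq0 n : zenum n <> 0%Z.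
Proof. unfold zenum; destruct (Nat.even n); set (d := Nat.div2 n); lia. Qed.

Lemma IZR_abs_zenum n : IZR (Z.abs (zenum n)) = INR (Nat.div2 n) + 1.
Proof.
  assert (IZR (Z.of_nat (Nat.div2 n + 1)) = INR (Nat.div2 n) + 1)
    by (rewrite <- INR_IZR_INZ, plus_INR; simpl; ring).
  unfold zenum; destruct (Nat.even n); [|rewrite Z.abs_opp]; rewrite Z.abs_eq; auto;
    set (d := Nat.div2 n); lia.
Qed.

Lemma IZR_abs_zenum_gt0 n : 0 < IZR (Z.abs (zenum n)).
Proof. rewrite IZR_abs_zenum; pose proof (pos_INR (Nat.div2 n)); lra. Qed.

Lemma kpow_gt0 s k : 0 < kpow s k.
Proof. apply exp_pos. Qed.

Lemma Rpower_le_antimono x y e : 0 < x <= y -> e <= 0 -> Rpower y e <= Rpower x e.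
Proof.
  intros Hxy He; unfold Rpower.
  assert (Hln : e * ln y <= e * ln x) by (apply Rmult_le_compat_neg_l; [lra|apply ln_le; lra]).
  destruct (Rle_lt_or_eq_dec _ _ Hln) as [Hlt|Heq]; [left; apply exp_increasing; lra|].
  rewrite Heq; lra.
Qed.

(* [|zenum n| >= (n + 1) / 2], so the series is dominated by a multiple of
   [sum_n (n + 1)^(2s)]. *)
Lemma ex_series_kpow s : s < - 1/2 -> ex_series (fun n => kpow s (zenum n)).
Proof.
  intros Hs.
  assert (Hb : ex_series (fun n => Rpower 2 (- (2 * s)) * Rpower (INR n + 1) (2 * s))).
  { pose proof (ex_series_Rpower_succ (- (2 * s) - 1) ltac:(lra)) as H.
    replace (- (- (2 * s) - 1 + 1)) with (2 * s) in H by ring.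
    exact (ex_series_scal_l (Rpower 2 (- (2 * s))) _ H). }
  eapply proj1, ex_series_Series_le; [|exact Hb]; intros n.
  split; [left; apply kpow_gt0|].
  pose proof (pos_INR (Nat.div2 n)); pose proof (pos_INR n).
  replace (Rpower 2 (- (2 * s)) * Rpower (INR n + 1) (2 * s))
    with (Rpower ((INR n + 1) / 2) (2 * s))
    by (unfold Rpower; rewrite <- exp_plus, ln_div by lra; f_equal; ring).
  unfold kpow; rewrite IZR_abs_zenum; apply Rpower_le_antimono; [split|lra].
  - lra.
  - assert (n <= 2 * Nat.div2 n + 1)%nat
      by (pose proof (Nat.div2_odd n); destruct (Nat.odd n); simpl in *; lia).
    apply le_INR in H1; rewrite plus_INR, mult_INR in H1; simpl in H1; lra.
Qed.

Definition weight_sum (s : R) : R := Series (fun n => kpow s (zenum n)).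

Lemma Hdot_terms_ge0 s v n : 0 <= Hdot_terms s v n.
Proof. apply Rmult_le_pos; [left; apply kpow_gt0|apply pow2_ge_0]. Qed.

Lemma Hdot_terms_0 v n : Hdot_terms 0 v n = Cmod (v (zenum n)) ^ 2.
Proof.
  unfold Hdot_terms, kpow, Rpower; rewrite Rmult_0_r, Rmult_0_l, exp_0; ring.
Qed.

Definition modZ0 (w : seqZ0) (k : Z) : R := if Z.eqb k 0 then 0 else Cmod (w k).

Lemma modZ0_ge0 w k : 0 <= modZ0 w k.
Proof. unfold modZ0; destruct (Z.eqb k 0); [lra|apply Cmod_ge_0]. Qed.

Lemma Cmod_cexpi th : Cmod (cexpi th) = 1.
Proof.
  unfold Cmod, cexpi; cbn [fst snd]; rewrite <- sqrt_1; f_equal.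
  pose proof (sin2_cos2 th) as H; unfold Rsqr in H; nra.
Qed.

Lemma Cmod_R3_term t u v w k k1 k2 : k1 <> 0%Z ->
  Cmod (R3_term t u v w k k1 k2) =
  Cmod (u k1) / IZR (Z.abs k1) * (Cmod (v k2) * modZ0 w (k - k1 - k2)).
Proof.
  intros Hk1; apply not_0_IZR in Hk1; unfold R3_term, modZ0.
  destruct (Z.eqb (k - k1 - k2) 0); [rewrite Cmod_0; ring|].
  rewrite !Cmod_mult, Cmod_div, Cmod_cexpi, Cmod_R, abs_IZR.
  - field; pose proof (Rabs_pos_lt _ Hk1); lra.
  - intros H; apply (f_equal fst) in H; simpl in H; auto.
Qed.

(* [n |-> zenum_inv (c - zenum n)] is injective where [c - zenum n <> 0]. *)
Lemma Series_modZ0_reflect_le w c : in_Hdot 0 w ->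
  ex_series (fun n => modZ0 w (c - zenum n) ^ 2) /\
  Series (fun n => modZ0 w (c - zenum n) ^ 2) <= Series (Hdot_terms 0 w).
Proof.
  intros Hw; apply (ex_series_inj_reindex _ _ (fun n => zenum_inv (c - zenum n)));
    auto using Hdot_terms_ge0, pow2_ge_0.
  - intros n; unfold modZ0; destruct (Z.eqb_spec (c - zenum n) 0).
    + rewrite pow_i by lia; apply Hdot_terms_ge0.
    + rewrite Hdot_terms_0, zenum_invK; auto; lra.
  - intros i j Hi Hj Hp; unfold modZ0 in Hi, Hj.
    destruct (Z.eqb_spec (c - zenum i) 0); [simpl in Hi; lra|].
    destruct (Z.eqb_spec (c - zenum j) 0); [simpl in Hj; lra|].
    apply (f_equal zenum) in Hp; rewrite !zenum_invK in Hp by assumption.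
    apply zenum_inj; lia.
Qed.

Lemma Series_convolution_le v w c : in_Hdot 0 v -> in_Hdot 0 w ->
  ex_series (fun n => Cmod (v (zenum n)) * modZ0 w (c - zenum n)) /\
  Series (fun n => Cmod (v (zenum n)) * modZ0 w (c - zenum n)) <=
  Hdot_norm 0 v * Hdot_norm 0 w.
Proof.
  intros Hv Hw.
  assert (Ev : forall n, Cmod (v (zenum n)) ^ 2 = Hdot_terms 0 v n)
    by (intros; rewrite Hdot_terms_0; reflexivity).
  destruct (Series_modZ0_reflect_le w c Hw) as [Hw1 Hw2].
  destruct (Series_mult_le_sqrt (fun n => Cmod (v (zenum n))) (fun n => modZ0 w (c - zenum n)))
    as [H1 H2]; auto using Cmod_ge_0, modZ0_ge0.
  { exact (ex_series_ext _ _ (fun n => eq_sym (Ev n)) Hv). }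
  split; auto; eapply Rle_trans; [exact H2|].
  unfold Hdot_norm; rewrite (Series_ext _ _ Ev).
  apply Rmult_le_compat_l; [apply sqrt_pos|]; apply sqrt_le_1_alt; exact Hw2.
Qed.

(* Cauchy-Schwarz with [|u_k| / |k| = (|k|^(-beta) |u_k|) |k|^(beta - 1)]. *)
Lemma Series_weighted_l1_le u beta : beta < 1/2 -> in_Hdot (- beta) u ->
  ex_series (fun n => Cmod (u (zenum n)) / IZR (Z.abs (zenum n))) /\
  Series (fun n => Cmod (u (zenum n)) / IZR (Z.abs (zenum n))) <=
  Hdot_norm (- beta) u * sqrt (weight_sum (beta - 1)).
Proof.
  intros Hb Hu.
  set (x := fun n => IZR (Z.abs (zenum n))).
  assert (Ea : forall n, (Rpower (x n) (- beta) * Cmod (u (zenum n))) ^ 2 =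
                         Hdot_terms (- beta) u n).
  { intros n; unfold Hdot_terms, kpow; fold (x n).
    replace (2 * - beta) with (- beta + - beta) by ring; rewrite Rpower_plus; ring. }
  assert (Eb : forall n, Rpower (x n) (beta - 1) ^ 2 = kpow (beta - 1) (zenum n)).
  { intros n; unfold kpow; fold (x n).
    replace (2 * (beta - 1)) with ((beta - 1) + (beta - 1)) by ring; rewrite Rpower_plus; ring. }
  assert (Eab : forall n, Rpower (x n) (- beta) * Cmod (u (zenum n)) * Rpower (x n) (beta - 1) =
                          Cmod (u (zenum n)) / x n).
  { intros n; pose proof (IZR_abs_zenum_gt0 n); fold (x n) in H.
    rewrite Rmult_comm, <- Rmult_assoc, <- Rpower_plus.
    replace (beta - 1 + - beta) with (- (1)) by ring.
    rewrite Rpower_Ropp, Rpower_1 by exact H; unfold Rdiv; ring. }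
  destruct (Series_mult_le_sqrt (fun n => Rpower (x n) (- beta) * Cmod (u (zenum n)))
                                (fun n => Rpower (x n) (beta - 1))) as [H1 H2].
  - intros; apply Rmult_le_pos; [left; apply exp_pos|apply Cmod_ge_0].
  - intros; left; apply exp_pos.
  - exact (ex_series_ext _ _ (fun n => eq_sym (Ea n)) Hu).
  - apply (ex_series_ext _ _ (fun n => eq_sym (Eb n))), ex_series_kpow; lra.
  - rewrite (Series_ext _ _ Ea), (Series_ext _ _ Eb), (Series_ext _ _ Eab) in H2.
    split; [exact (ex_series_ext _ _ Eab H1)|exact H2].
Qed.

Lemma R3_abs_summable_le t u v w beta k : beta < 1/2 ->
  in_Hdot (- beta) u -> in_Hdot 0 v -> in_Hdot 0 w ->
  R3_abs_summable t u v w k /\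
  Series (fun n1 => Series (fun n2 => Cmod (R3_term t u v w k (zenum n1) (zenum n2)))) <=
  Hdot_norm (- beta) u * sqrt (weight_sum (beta - 1)) * (Hdot_norm 0 v * Hdot_norm 0 w).
Proof.
  intros Hb Hu Hv Hw.
  set (c := fun n => Cmod (u (zenum n)) / IZR (Z.abs (zenum n))).
  assert (c_ge0 : forall n, 0 <= c n)
    by (intros; apply Rdiv_le_0_compat; [apply Cmod_ge_0|apply IZR_abs_zenum_gt0]).
  assert (E : forall n1 n2, Cmod (R3_term t u v w k (zenum n1) (zenum n2)) =
      c n1 * (Cmod (v (zenum n2)) * modZ0 w (k - zenum n1 - zenum n2)))
    by (intros; apply Cmod_R3_term, zenum_neq0).
  assert (Inner : forall n1,
      ex_series (fun n2 => Cmod (R3_term t u v w k (zenum n1) (zenum n2))) /\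
      0 <= Series (fun n2 => Cmod (R3_term t u v w k (zenum n1) (zenum n2))) <=
           c n1 * (Hdot_norm 0 v * Hdot_norm 0 w)).
  { intros n1; destruct (Series_convolution_le v w (k - zenum n1) Hv Hw) as [H1 H2].
    rewrite (Series_ext _ _ (E n1)); split.
    { exact (ex_series_ext _ _ (fun n2 => eq_sym (E n1 n2)) (ex_series_scal_l _ _ H1)). }
    rewrite Series_scal_l; split.
    - apply Rmult_le_pos, Series_nonneg; auto.
      intros; apply Rmult_le_pos; [apply Cmod_ge_0|apply modZ0_ge0].
    - apply Rmult_le_compat_l; auto. }
  destruct (Series_weighted_l1_le u beta Hb Hu) as [O1 O2].
  destruct (ex_series_Series_le
              (fun n1 => Series (fun n2 => Cmod (R3_term t u v w k (zenum n1) (zenum n2))))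
              (fun n1 => c n1 * (Hdot_norm 0 v * Hdot_norm 0 w))) as [S1 S2].
  { intros n1; apply Inner. }
  { apply ex_series_scal_r; exact O1. }
  split; [split; [apply Inner|exact S1]|].
  eapply Rle_trans; [exact S2|]; rewrite Series_scal_r.
  apply Rmult_le_compat_r; [apply Rmult_le_pos; apply sqrt_pos|exact O2].
Qed.

Lemma Rabs_iterated_Series_le (f : C -> R) (x : nat -> nat -> C) :
  (forall z, Rabs (f z) <= Cmod z) ->
  (forall n1, ex_series (fun n2 => Cmod (x n1 n2))) ->
  ex_series (fun n1 => Series (fun n2 => Cmod (x n1 n2))) ->
  Rabs (Series (fun n1 => Series (fun n2 => f (x n1 n2)))) <=
  Series (fun n1 => Series (fun n2 => Cmod (x n1 n2))).
Proof.
  intros Hf H1 H2.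
  assert (Inner : forall n1, ex_series (fun n2 => Rabs (f (x n1 n2))) /\
     Rabs (Series (fun n2 => f (x n1 n2))) <= Series (fun n2 => Cmod (x n1 n2))).
  { intros n1; destruct (ex_series_Series_le (fun n2 => Rabs (f (x n1 n2)))
                                             (fun n2 => Cmod (x n1 n2))) as [A B]; auto.
    { intros; split; [apply Rabs_pos|auto]. }
    split; auto; eapply Rle_trans; [apply Series_Rabs; auto|exact B]. }
  destruct (ex_series_Series_le (fun n1 => Rabs (Series (fun n2 => f (x n1 n2))))
              (fun n1 => Series (fun n2 => Cmod (x n1 n2)))) as [A B]; auto.
  { intros; split; [apply Rabs_pos|apply Inner]. }
  eapply Rle_trans; [apply Series_Rabs; auto|exact B].
Qed.

(* The real and imaginary parts are bounded separately, whence the factor [sqrt 2]. *)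
Lemma Cmod_CSeries_iterated_le (x : nat -> nat -> C) :
  (forall n1, ex_series (fun n2 => Cmod (x n1 n2))) ->
  ex_series (fun n1 => Series (fun n2 => Cmod (x n1 n2))) ->
  Cmod (CSeries (fun n1 => CSeries (fun n2 => x n1 n2))) <=
  sqrt 2 * Series (fun n1 => Series (fun n2 => Cmod (x n1 n2))).
Proof.
  intros H1 H2; eapply Rle_trans; [apply Cmod_2Rmax|].
  apply Rmult_le_compat_l; [apply sqrt_pos|]; unfold CSeries; simpl.
  apply Rmax_lub; apply Rabs_iterated_Series_le; auto; intros z.
  - eapply Rle_trans; [apply Rmax_l|apply Rmax_Cmod].
  - eapply Rle_trans; [apply Rmax_r|apply Rmax_Cmod].
Qed.

Lemma in_Hdot_of_bounded s x M : 1/2 < s -> (forall n, Cmod (x (zenum n)) <= M) ->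
  in_Hdot (- s) x /\ Hdot_norm (- s) x <= sqrt (weight_sum (- s)) * M.
Proof.
  intros Hs HM.
  assert (M_ge0 : 0 <= M) by (eapply Rle_trans; [apply Cmod_ge_0|apply (HM O)]).
  assert (Hw : ex_series (fun n => kpow (- s) (zenum n))) by (apply ex_series_kpow; lra).
  destruct (ex_series_Series_le (Hdot_terms (- s) x) (fun n => kpow (- s) (zenum n) * M ^ 2))
    as [S1 S2].
  - intros n; split; [apply Hdot_terms_ge0|]; apply Rmult_le_compat_l; [left; apply kpow_gt0|].
    apply pow_incr; split; [apply Cmod_ge_0|apply HM].
  - apply ex_series_scal_r; exact Hw.
  - split; [exact S1|]; rewrite Series_scal_r in S2; fold (weight_sum (- s)) in S2.
    unfold Hdot_norm; eapply Rle_trans; [apply sqrt_le_1_alt; exact S2|].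
    rewrite sqrt_mult_alt, sqrt_pow2 by (auto; apply Series_nonneg; auto;
                                             intros; left; apply kpow_gt0).
    lra.
Qed.

Theorem lemma7p18 (S beta : R) (hS : 1/2 < S) (hbeta : beta < 1/2) :
  exists c6' : R,
    forall (t : R) (u v w : seqZ0),
      in_Hdot (- beta) u -> in_Hdot 0 v -> in_Hdot 0 w ->
      (forall k : Z, k <> 0%Z -> R3_abs_summable t u v w k) /\
      in_Hdot (- S) (R3 t u v w) /\
      Hdot_norm (- S) (R3 t u v w)
        <= c6' * Hdot_norm (- beta) u * Hdot_norm 0 v * Hdot_norm 0 w.
Proof.
  exists (sqrt (weight_sum (- S)) * sqrt 2 * sqrt (weight_sum (beta - 1))).
  intros t u v w Hu Hv Hw.
  set (Q := Hdot_norm (- beta) u * sqrt (weight_sum (beta - 1)) *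
            (Hdot_norm 0 v * Hdot_norm 0 w)).
  assert (Pointwise : forall k, R3_abs_summable t u v w k /\ Cmod (R3 t u v w k) <= sqrt 2 * Q).
  { intros k; destruct (R3_abs_summable_le t u v w beta k hbeta Hu Hv Hw) as [[H1 H2] HQ].
    split; [split; assumption|].
    eapply Rle_trans; [apply Cmod_CSeries_iterated_le; assumption|].
    apply Rmult_le_compat_l; [apply sqrt_pos|exact HQ]. }
  destruct (in_Hdot_of_bounded S (R3 t u v w) (sqrt 2 * Q) hS
              (fun n => proj2 (Pointwise (zenum n)))) as [Hin Hnorm].
  split; [intros k _; apply Pointwise|]; split; [exact Hin|].
  eapply Rle_trans; [exact Hnorm|]; unfold Q; right; ring.
Qed.
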